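(* In the risk-aversion-shock setting, suppose $\mathbb P_{(z,\hat z)}(\hat\beta\hat R>0)>0$ for all $z,\hat z\in\mathsf Z$. If there exists $z_{ij}\in\mathsf Z$ such that $\lim_{w\to\infty}c^*(w,z_{ij})/w>0$, then $\bar p_{i1}=\cdots=\bar p_{i,i-1}=0$. In particular, if for every $i>1$ there exists $j$ with $\lim_{w\to\infty}c^*(w,z_{ij})/w>0$, then $\bar P$ is upper triangular.
   Context: Risk-aversion-shock setting. $\mathsf Z=\bar{\mathsf Z}\times\tilde{\mathsf Z}$ with $\bar{\mathsf Z}=\{\bar z_1,\dots,\bar z_N\}$, $\tilde{\mathsf Z}=\{\tilde z_1,\dots,\tilde z_M\}$; $Z_t=(\bar Z_t,\tilde Z_t)$ where $\{\bar Z_t\}$, $\{\tilde Z_t\}$ are independent Markov chains with transition matrices $\bar P=(\bar p_{ij})$ and $\tilde P=(\tilde p_{jk})$, so $\{Z_t\}$ has transition matrix $P=\bar P\otimes\tilde P$. Write $z_{ij}=(\bar z_i,\tilde z_j)$. $\{\epsilon_t\}_{t\ge1}$ i.i.d. with distribution $\pi$, independent of $\{Z_t\}$; for nonnegative measurable $\beta,R,Y$, $\beta_t=\beta(Z_{t-1},Z_t,\epsilon_t)$, $R_t=R(Z_{t-1},Z_t,\epsilon_t)$, $Y_t=Y(Z_{t-1},Z_t,\epsilon_t)$, $\beta_0=1$. Utility: $u(c,z_{ij})=c^{1-\gamma_i}/(1-\gamma_i)$ if $\gamma_i\ne1$ and $\log c$ if $\gamma_i=1$, where $0<\gamma_1<\dots<\gamma_N$;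 $u'(c,z)$ is the derivative in $c$. $\mathbb E_z$: expectation given $Z_0=z$; under $\mathbb E_z$, $\hat Z=Z_1$, $\hat\beta=\beta(z,\hat Z,\epsilon_1)$, $\hat R=R(z,\hat Z,\epsilon_1)$, $\hat Y=Y(z,\hat Z,\epsilon_1)$. $\mathbb P_{(z,\hat z)}(\hat\beta\hat R>0):=\pi\{\epsilon:\beta(z,\hat z,\epsilon)R(z,\hat z,\epsilon)>0\}$. Assumption 2 holds: (a) $\mathbb E_zu'(\hat Y,\hat Z)<\infty$ and $\mathbb E_z\hat\beta\hat Ru'(\hat Y,\hat Z)<\infty$ for all $z$; (b) $r(K(1))<1$ ($r$ = spectral radius), $K_{z\hat z}(\theta)=P(z,\hat z)\int\beta(z,\hat z,\epsilon)R(z,\hat z,\epsilon)^\theta\pi(d\epsilon)$. $S_0=(0,\infty)\times\mathsf Z$; $\mathcal C$: continuous $c:S_0\to\mathbb R_+$, increasing in $w$, $0<c(w,z)\le w$, $\sup_{S_0}|u'(c(w,z),z)-u'(w,z)|<\infty$. $T$: $Tc(w,z)$ is the unique $\xi\in(0,w]$ with $u'(\xi,z)=\max\{\mathbb E_z\hat\beta\hat Ru'(c(\hat R(w-\xi)+\hat Y,\hat Z),\hat Z),u'(w,z)\}$. $c^*$ is the unique fixed point of $T$ in $\mathcal C$ (optimal consumption function). *)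

From HB Require Import structures.
From mathcomp Require Import all_boot all_order all_algebra.
From mathcomp Require Import all_classical all_reals all_analysis.
From mathcomp Require Import complex.

Set Implicit Arguments.
Unset Strict Implicit.
Unset Printing Implicit Defensive.

Import Order.TTheory GRing.Theory Num.Theory.
Import numFieldNormedType.Exports.
Local Open Scope classical_set_scope.
Local Open Scope ring_scope.

(* The state space Z = Zbar x Ztilde, with Zbar = {zbar_0,...,zbar_(N-1)}
   and Ztilde = {ztilde_0,...,ztilde_(M-1)}; z_ij = (i, j). *)
Definition Zsp (N M : nat) : finType := ('I_N * 'I_M)%type.

Definition stochastic (R : realType) (n : nat) (Q : 'I_n -> 'I_n -> R) : Prop :=
  (forall i j, 0 <= Q i j) /\ (forall i, \sum_(j < n) Q i j = 1).

Definition Ptens (R : realType) (N M : nat)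
  (Pb : 'I_N -> 'I_N -> R) (Pt : 'I_M -> 'I_M -> R) (z zh : Zsp N M) : R :=
  Pb z.1 zh.1 * Pt z.2 zh.2.

(* Marginal utility u'(c, z_ij) = c^(-gamma_i) for c > 0 (this covers the
   log case gamma_i = 1); u'(c, z) = +oo for c <= 0 (u'(0,z) = +oo). *)
Definition uprime (R : realType) (N M : nat) (gam : 'I_N -> R)
  (c : R) (z : Zsp N M) : \bar R :=
  if 0 < c then ((c `^ (- gam z.1))%:E)%E else (+oo)%E.

Definition Ez (R : realType) (N M : nat) (d : measure_display)
  (E : measurableType d) (P : Zsp N M -> Zsp N M -> R)
  (pi : probability E R) (z : Zsp N M) (f : Zsp N M -> E -> \bar R) : \bar R :=
  (\sum_(zh : Zsp N M) (P z zh)%:E * \int[pi]_e f zh e)%E.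

Definition spec_rad_lt1 (R : realType) (n : nat) (A : 'M[R]_n) : Prop :=
  forall lam : R[i], root (char_poly (map_mx (fun x : R => (x%:C)%C) A)) lam ->
    `|lam| < 1.

Definition K1 (R : realType) (N M : nat) (d : measure_display)
  (E : measurableType d) (P : Zsp N M -> Zsp N M -> R) (pi : probability E R)
  (beta Rf : Zsp N M -> Zsp N M -> E -> R) : 'M[R]_#|Zsp N M| :=
  \matrix_(a < #|Zsp N M|, b < #|Zsp N M|)
    (P (enum_val a) (enum_val b) *
     fine (\int[pi]_e (beta (enum_val a) (enum_val b) e
                       * Rf (enum_val a) (enum_val b) e)%:E)).

Definition assumption2 (R : realType) (N M : nat) (d : measure_display)
  (E : measurableType d) (gam : 'I_N -> R) (P : Zsp N M -> Zsp N M -> R)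
  (pi : probability E R) (beta Rf Y : Zsp N M -> Zsp N M -> E -> R) : Prop :=
  (forall z, (Ez P pi z (fun zh e => uprime gam (Y z zh e) zh) < +oo)%E) /\
  (forall z, (Ez P pi z (fun zh e =>
       (beta z zh e * Rf z zh e)%:E * uprime gam (Y z zh e) zh) < +oo)%E) /\
  (forall z zh, 0 < P z zh ->
       (\int[pi]_e (beta z zh e * Rf z zh e)%:E < +oo)%E) /\
  spec_rad_lt1 (K1 P pi beta Rf).

(* The candidate class C of consumption functions c : S_0 -> R_+
   (values of c at w <= 0 are irrelevant). *)
Definition in_C (R : realType) (N M : nat) (gam : 'I_N -> R)
  (c : R -> Zsp N M -> R) : Prop :=
  (forall z, {within [set w : R | 0 < w], continuous (fun w => c w z)}) /\
  (forall z w w', 0 < w -> w <= w' -> c w z <= c w' z) /\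
  (forall w z, 0 < w -> 0 < c w z /\ c w z <= w) /\
  (exists K : R, forall w z, 0 < w ->
       `| c w z `^ (- gam z.1) - w `^ (- gam z.1) | <= K).

(* A next-period wealth of 0 gives consumption 0 (limit of 0 < c(w) <= w),
   hence u' = +oo; conventions 0 * +oo = 0 as usual. *)
Definition T_rhs (R : realType) (N M : nat) (d : measure_display)
  (E : measurableType d) (gam : 'I_N -> R) (P : Zsp N M -> Zsp N M -> R)
  (pi : probability E R) (beta Rf Y : Zsp N M -> Zsp N M -> E -> R)
  (c : R -> Zsp N M -> R) (w xi : R) (z : Zsp N M) : \bar R :=
  Order.max
    (Ez P pi z (fun zh e =>
       let a := Rf z zh e * (w - xi) + Y z zh e in
       let ca := (if (0 < a)%R then c a zh else 0%R) in
       ((beta z zh e * Rf z zh e)%:E * uprime gam ca zh)%E))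
    (uprime gam w z).

Definition is_Tc (R : realType) (N M : nat) (d : measure_display)
  (E : measurableType d) (gam : 'I_N -> R) (P : Zsp N M -> Zsp N M -> R)
  (pi : probability E R) (beta Rf Y : Zsp N M -> Zsp N M -> E -> R)
  (c : R -> Zsp N M -> R) (w : R) (z : Zsp N M) (xi : R) : Prop :=
  0 < xi /\ xi <= w /\ uprime gam xi z = T_rhs gam P pi beta Rf Y c w xi z.

Definition fixed_point_T (R : realType) (N M : nat) (d : measure_display)
  (E : measurableType d) (gam : 'I_N -> R) (P : Zsp N M -> Zsp N M -> R)
  (pi : probability E R) (beta Rf Y : Zsp N M -> Zsp N M -> E -> R)
  (c : R -> Zsp N M -> R) : Prop :=
  forall w z, 0 < w -> is_Tc gam P pi beta Rf Y c w z (c w z).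

Definition pos_asym_mpc (R : realType) (N M : nat)
  (c : R -> Zsp N M -> R) (z : Zsp N M) : Prop :=
  exists l : R, 0 < l /\ (fun w => c w z / w) x @[x --> +oo] --> l.

From HB Require Import structures.
From mathcomp Require Import all_boot all_order all_algebra.
From mathcomp Require Import all_classical all_reals all_analysis.
From mathcomp Require Import complex ring lra.
Import Order.TTheory GRing.Theory Num.Theory.
Import numFieldNormedType.Exports.
Import HBNNSimple.
Local Open Scope classical_set_scope.
Local Open Scope ring_scope.

(* Suppose the chain moves from z_ij with positive probability to a state
   z_kj' of lower risk aversion gamma_k < gamma_i.  On a set of shocks of
   positive probability, beta R is bounded below and R, Y are bounded above,
   so next-period wealth, hence next-period consumption, is O(w).  The Euler
   inequality u'(c*(w,z)) >= E_z beta R u'(c*(...)) then bounds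
   c*(w,z)^(-gamma_i) below by a multiple of w^(-gamma_k).  A positive
   asymptotic MPC gives c*(w,z)^(-gamma_i) = O(w^(-gamma_i)), which decays
   strictly faster: contradiction. *)

Section NegativePowers.
Context {R : realType}.
Implicit Types (a b d g l w x y C D M eps : R).

Lemma powRN_le g x y : 0 < x -> x <= y -> 0 <= g -> y `^ (- g) <= x `^ (- g).
Proof.
move=> x0 xy g0; have y0 : 0 < y by exact: lt_le_trans xy.
rewrite !powRN lef_pV2 ?posrE ?powR_gt0 //.
apply: (ge0_ler_powR g0) => //; rewrite nnegrE ltW //.
Qed.

Lemma powRN_lt_eventually {d eps} M : 0 < d -> 0 < eps ->
  exists w, [/\ M < w, 0 < w & w `^ (- d) < eps].
Proof.
move=> d0 eps0; set B := eps^-1 + 1.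
have B0 : 0 < B by rewrite addr_gt0 ?invr_gt0.
pose w := Num.max (M + 1) (B `^ d^-1).
have wB : B `^ d^-1 <= w by rewrite le_max lexx orbT.
have w0 : 0 < w by apply: lt_le_trans wB; rewrite powR_gt0.
exists w; split => //; first by rewrite lt_max ltrDl ltr01.
have Bw : B <= w `^ d.
  have -> : B = (B `^ d^-1) `^ d by rewrite -powRrM mulVf ?powRr1 ?gt_eqF ?ltW.
  by apply: (ge0_ler_powR (ltW d0)) => //; rewrite nnegrE ?powR_ge0 ?ltW.
rewrite powRN -[eps]invrK ltf_pV2 ?posrE ?invr_gt0 ?powR_gt0 //.
by apply: lt_le_trans Bw; rewrite ltrDl.
Qed.

Lemma powRN_not_dominated {C D a b} M : 0 < C -> 0 < D -> a < b ->
  ~ (forall w, M < w -> C * w `^ (- a) <= D * w `^ (- b)).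
Proof.
move=> C0 D0 ab dom.
have ba0 : 0 < b - a by rewrite subr_gt0.
have [w [Mw w0 small]] := powRN_lt_eventually M ba0 (divr_gt0 C0 D0).
have split_b : w `^ (- b) = w `^ (- a) * w `^ (- (b - a)).
  by rewrite -powRD ?lt0r_neq0 ?implybT //; congr (_ `^ _); lra.
have wa0 : 0 < w `^ (- a) by rewrite powR_gt0.
have Dsmall : D * w `^ (- (b - a)) < C by rewrite -ltr_pdivlMl // mulrC.
have := dom w Mw; rewrite split_b; nra.
Qed.

Lemma powRN_le_of_cvg_ratio {c : R -> R} {l g} : 0 < l -> 0 <= g ->
  c x / x @[x --> +oo] --> l ->
  exists D M, 0 < D /\ forall w, M < w -> c w `^ (- g) <= D * w `^ (- g).
Proof.
move=> l0 g0 cl; have l2l : l / 2 < l by lra.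
have [Mb [_ ratio_gt]] := cvgr_gt _ cl _ l2l.
exists ((l / 2) `^ (- g)), (Num.max Mb 0).
split; first by rewrite powR_gt0 ?divr_gt0.
move=> w; rewrite gt_max => /andP[/ratio_gt/= lt_ratio w0].
have lw0 : 0 < l / 2 * w by rewrite mulr_gt0 ?divr_gt0.
rewrite -powRM ?(ltW w0) ?divr_ge0 ?(ltW l0) //; apply: powRN_le => //.
by rewrite ltW // -ltr_pdivlMr.
Qed.

End NegativePowers.

Lemma stochastic_row_gt0 {R : realType} {n} {Q : 'I_n -> 'I_n -> R} :
  stochastic Q -> forall i, exists j, 0 < Q i j.
Proof.
move=> [Q_ge0 Q_sum1] i; apply: contrapT => no_pos.
have : \sum_(j < n) Q i j = 0.
  apply: big1 => j _; apply/eqP; rewrite eq_le Q_ge0 andbT leNgt.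
  by apply/negP => Qij; apply: no_pos; exists j.
by rewrite Q_sum1 => /eqP; rewrite oner_eq0.
Qed.

Section MarginalUtility.
Variables (R : realType) (N M : nat) (gam : 'I_N -> R).
Implicit Types (c x : R) (z : Zsp N M).

Lemma uprime_ge0 c z : (0 <= uprime gam c z)%E.
Proof. by rewrite /uprime; case: ifP => // _; rewrite lee_fin powR_ge0. Qed.

Lemma uprime_gt0E c z : 0 < c -> uprime gam c z = (c `^ (- gam z.1))%:E.
Proof. by rewrite /uprime => ->. Qed.

Lemma uprime_ge_powR c x z : 0 < x -> c <= x -> 0 <= gam z.1 ->
  ((x `^ (- gam z.1))%:E <= uprime gam c z)%E.
Proof.
move=> x0 cx g0; rewrite /uprime; case: ifPn => [c0|]; last by rewrite leey.
by rewrite lee_fin powRN_le.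
Qed.

End MarginalUtility.

Lemma Ez_ge_term {R : realType} {N M : nat} {d} {E : measurableType d}
  {P : Zsp N M -> Zsp N M -> R} {mu : probability E R} {z : Zsp N M}
  (zh : Zsp N M) {f : Zsp N M -> E -> \bar R} :
  (forall zz, 0 <= P z zz) -> (forall zz e, 0 <= f zz e)%E ->
  ((P z zh)%:E * \int[mu]_e f zh e <= Ez P mu z f)%E.
Proof.
move=> P_ge0 f_ge0; rewrite /Ez (bigD1 zh) //= leeDl // sume_ge0 // => zz _.
by rewrite mule_ge0 ?lee_fin ?integral_ge0.
Qed.

Lemma integral_ge_indic {d} {T : measurableType d} {R : realType}
  {mu : {measure set T -> \bar R}} {A : set T} {k : R} {f : T -> \bar R} :
  measurable A -> 0 <= k -> (forall x, 0 <= f x)%E ->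
  (forall x, (k * \1_A x)%:E <= f x)%E ->
  (k%:E * mu A <= \int[mu]_x f x)%E.
Proof.
move=> mA k0 f0 kAf; rewrite ge0_integralTE //.
apply: ereal_sup_ubound; exists (scale_nnsfun (indic_nnsfun R mA) k0) => //=.
by rewrite sintegralrM sintegral_indic.
Qed.

Section ShockBox.
Context {d} {T : measurableType d} {R : realType}.
Variables (F G H : T -> R).
Hypotheses (mF : measurable_fun setT F) (mG : measurable_fun setT G)
  (mH : measurable_fun setT H).

Definition shock_box (n : nat) : set T :=
  [set e | n.+1%:R^-1 <= F e] `&` [set e | G e <= n.+1%:R] `&`
  [set e | H e <= n.+1%:R].

Let measurable_ge_set (f : T -> R) a : measurable_fun setT f ->
  measurable [set e | a <= f e].
Proof. by move=> mf; rewrite -preimage_itvcy -(setTI (_ @^-1` _)); exact: mf. Qed.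

Let measurable_le_set (f : T -> R) a : measurable_fun setT f ->
  measurable [set e | f e <= a].
Proof. by move=> mf; rewrite -preimage_itvNyc -(setTI (_ @^-1` _)); exact: mf. Qed.

Let measurable_gt_set (f : T -> R) a : measurable_fun setT f ->
  measurable [set e | a < f e].
Proof. by move=> mf; rewrite -preimage_itvoy -(setTI (_ @^-1` _)); exact: mf. Qed.

Lemma measurable_shock_box n : measurable (shock_box n).
Proof.
by apply: measurableI; [apply: measurableI|];
  [exact: measurable_ge_set|exact: measurable_le_set|exact: measurable_le_set].
Qed.

Lemma shock_box_cover : [set e | 0 < F e] `<=` \bigcup_n shock_box n.
Proof.
move=> e /= Fe; pose x := Num.max (F e)^-1 (Num.max (G e) (H e)).
have x0 : 0 <= x by rewrite le_max ltW // invr_gt0.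
have : x < (Num.truncn x).+1%:R by rewrite -truncn_lt_nat.
rewrite !gt_max => /and3P[ltF ltG ltH].
exists (Num.truncn x) => //; split; [split|]; rewrite /= ?ltW //.
by rewrite -[F e]invrK ltf_pV2 ?posrE ?invr_gt0 // ltr0Sn.
Qed.

Lemma measure_shock_box_gt0 {mu : {measure set T -> \bar R}} :
  (0 < mu [set e | (0 < F e)%R])%E -> exists n, (0 < mu (shock_box n))%E.
Proof.
move=> Fpos; apply: contrapT => no_box.
have box0 n : mu (shock_box n) = 0%E.
  apply/eqP; rewrite eq_le measure_ge0 andbT leNgt; apply/negP => box_pos.
  by apply: no_box; exists n.
have := measure_sigma_subadditive mu measurable_shock_box
  (@measurable_gt_set F 0 mF) shock_box_cover.
by rewrite eseries0 => [|n _ _]; [rewrite leNgt Fpos|exact: box0].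
Qed.

End ShockBox.

Arguments measurable_shock_box {d T R F G H}.
Arguments measure_shock_box_gt0 {d T R F G H} mF mG mH {mu}.

Section EulerEquation.
Context {R : realType} {N M : nat} {d : measure_display} {E : measurableType d}.
Context { pi : probability E R } {Pb : 'I_N -> 'I_N -> R} {Pt : 'I_M -> 'I_M -> R}.
Context {gam : 'I_N -> R} {beta Rf Y : Zsp N M -> Zsp N M -> E -> R}.
Context {cstar : R -> Zsp N M -> R}.
Hypotheses (sPb : stochastic Pb) (sPt : stochastic Pt).
Hypothesis gam_ge0 : forall i, 0 <= gam i.
Hypothesis meas : forall z zh, measurable_fun setT (beta z zh) /\
  measurable_fun setT (Rf z zh) /\ measurable_fun setT (Y z zh).
Hypothesis nonneg :
  forall z zh e, 0 <= beta z zh e /\ 0 <= Rf z zh e /\ 0 <= Y z zh e.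
Hypothesis cstar_bounds : forall w z, 0 < w -> 0 < cstar w z /\ cstar w z <= w.
Hypothesis fixT : fixed_point_T gam (Ptens Pb Pt) pi beta Rf Y cstar.
Hypothesis posP :
  forall z zh, (0 < pi [set e | (0 < beta z zh e * Rf z zh e)%R])%E.

Let P := Ptens Pb Pt.

Let P_ge0 z zh : 0 <= P z zh.
Proof. by rewrite mulr_ge0 ?sPb.1 ?sPt.1. Qed.

Definition euler_integrand (w xi : R) (z zh : Zsp N M) (e : E) : \bar R :=
  let a := Rf z zh e * (w - xi) + Y z zh e in
  ((beta z zh e * Rf z zh e)%:E *
   uprime gam (if (0 < a)%R then cstar a zh else 0%R) zh)%E.

Let euler_integrand_ge0 w xi z zh e : (0 <= euler_integrand w xi z zh e)%E.
Proof.
have [b0 [R0 _]] := nonneg z zh e.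
by rewrite mule_ge0 ?uprime_ge0 // lee_fin mulr_ge0.
Qed.

Lemma euler_inequality w z : 0 < w ->
  (Ez P pi z (euler_integrand w (cstar w z) z) <= uprime gam (cstar w z) z)%E.
Proof. by move=> w0; rewrite (fixT w z w0).2.2 /T_rhs le_max lexx. Qed.

Let box z zh := shock_box (fun e => beta z zh e * Rf z zh e) (Rf z zh) (Y z zh).

Lemma euler_integrand_on_box w z zh n e : 1 <= w ->
  ((n.+1%:R^-1 * (2 * n.+1%:R * w) `^ (- gam zh.1) * \1_(box z zh n) e)%:E
    <= euler_integrand w (cstar w z) z zh e)%E.
Proof.
move=> w1; rewrite indicE.
case: (boolP (e \in _)) => [/set_mem box_e|_]; last first.
  by rewrite mulr0 euler_integrand_ge0.
have [[bR_ge /= R_le /=] Y_le /=] := box_e.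
have [b0 [R0 Y0]] := nonneg z zh e.
have w0 : 0 < w := lt_le_trans ltr01 w1.
have [cw0 cw_le] := cstar_bounds w z w0.
rewrite mulr1 EFinM lee_pmul ?lee_fin ?invr_ge0 ?powR_ge0 //.
set a := _ + _; apply: uprime_ge_powR => //; first by rewrite !mulr_gt0.
have a_le : a <= 2 * n.+1%:R * w.
  have n1 : (1 : R) <= n.+1%:R by rewrite ler1n.
  rewrite /a; nra.
case: ifPn => [a0|_]; last by rewrite mulr_ge0 ?ltW // lt_le_trans w1.
exact: le_trans (cstar_bounds a zh a0).2 a_le.
Qed.

Lemma euler_lower_bound {i k : 'I_N} (j : 'I_M) : 0 < Pb i k ->
  exists2 C, 0 < C &
    forall w, 1 <= w -> C * w `^ (- gam k) <= cstar w (i, j) `^ (- gam i).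
Proof.
move=> Pik; have [j' Pjj'] := stochastic_row_gt0 sPt j.
pose z : Zsp N M := (i, j); pose zh : Zsp N M := (k, j').
have [mb [mR mY]] := meas z zh.
have mbR := measurable_realfun.measurable_funM mb mR.
have [n box_pos] := measure_shock_box_gt0 mbR mR mY (posP z zh).
have mbox : measurable (box z zh n) := measurable_shock_box mbR mR mY n.
(* The cast picks the measure coercion that integral_ge_indic produces. *)
have pi_box : (pi : {measure set E -> \bar R}) (box z zh n)
    = (fine (pi (box z zh n)))%:E.
  by rewrite fineK ?fin_num_measure.
set q := fine _ in pi_box; have q0 : 0 < q by rewrite -lte_fin -pi_box.
exists (P z zh * (n.+1%:R^-1 * q) * (2 * n.+1%:R) `^ (- gam k)).
  by rewrite !mulr_gt0 ?invr_gt0 ?powR_gt0.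
move=> w w1; have w0 : 0 < w := lt_le_trans ltr01 w1.
have := euler_inequality w z w0.
rewrite uprime_gt0E ?(cstar_bounds w z w0).1 // -lee_fin; apply: le_trans.
apply: le_trans (Ez_ge_term zh (P_ge0 z) (euler_integrand_ge0 w _ z)).
have k_ge0 : 0 <= n.+1%:R^-1 * (2 * n.+1%:R * w) `^ (- gam k).
  by rewrite mulr_ge0 ?invr_ge0 ?powR_ge0.
have int_lb := integral_ge_indic (mu := pi) mbox k_ge0
  (euler_integrand_ge0 w _ z zh) (fun e => euler_integrand_on_box w z zh n e w1).
apply: le_trans (lee_wpmul2l _ int_lb); last by rewrite lee_fin P_ge0.
rewrite pi_box -!EFinM lee_fin (powRM _ _ (ltW w0)) ?mulr_ge0 //.
by rewrite le_eqVlt; apply/predU1l; ring.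
Qed.

Hypothesis gam_lt : forall i k : 'I_N, (i < k)%N -> gam i < gam k.

Lemma pos_asym_mpc_no_move_down {i : 'I_N} {j : 'I_M} {k : 'I_N} :
  pos_asym_mpc cstar (i, j) -> (k < i)%N -> Pb i k = 0.
Proof.
move=> [l [l0 mpc_l]] ki; apply/eqP; rewrite eq_le sPb.1 andbT leNgt.
apply/negP => Pik; have [C C0 lower] := euler_lower_bound j Pik.
have [D [Mc [D0 upper]]] := powRN_le_of_cvg_ratio l0 (gam_ge0 i) mpc_l.
apply: (powRN_not_dominated (Num.max Mc 1) C0 D0 (gam_lt _ _ ki)) => w.
by rewrite gt_max => /andP[/upper Mw w1]; exact: le_trans (lower w (ltW w1)) Mw.
Qed.

End EulerEquation.

Theorem proposition3p1 (R : realType) (N M : nat) (d : measure_display)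
  (E : measurableType d) (pi : probability E R)
  (Pb : 'I_N -> 'I_N -> R) (Pt : 'I_M -> 'I_M -> R) (gam : 'I_N -> R)
  (beta Rf Y : Zsp N M -> Zsp N M -> E -> R) (cstar : R -> Zsp N M -> R) :
  stochastic Pb -> stochastic Pt ->
  (forall i, 0 < gam i) -> (forall i k : 'I_N, (i < k)%N -> gam i < gam k) ->
  (forall z zh, measurable_fun setT (beta z zh) /\ measurable_fun setT (Rf z zh)
                /\ measurable_fun setT (Y z zh)) ->
  (forall z zh e, 0 <= beta z zh e /\ 0 <= Rf z zh e /\ 0 <= Y z zh e) ->
  assumption2 gam (Ptens Pb Pt) pi beta Rf Y ->
  in_C gam cstar -> fixed_point_T gam (Ptens Pb Pt) pi beta Rf Y cstar ->
  (forall z zh, (0 < pi [set e | (0 < beta z zh e * Rf z zh e)%R])%E) ->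
  (forall (i : 'I_N) (j : 'I_M), pos_asym_mpc cstar (i, j) ->
     forall k : 'I_N, (k < i)%N -> Pb i k = 0) /\
  ((forall i : 'I_N, (0 < i)%N -> exists j : 'I_M, pos_asym_mpc cstar (i, j)) ->
     forall i k : 'I_N, (k < i)%N -> Pb i k = 0).
Proof.
(* Assumption 2 only serves to construct c*, which is given here. *)
move=> sPb sPt gam_gt0 gam_lt meas nonneg _ [_ [_ [cstar_bounds _]]] fixT posP.
have gam_ge0 i : 0 <= gam i := ltW (gam_gt0 i).
have no_move_down := pos_asym_mpc_no_move_down sPb sPt gam_ge0 meas nonneg
  cstar_bounds fixT posP gam_lt.
split=> [i j mpc k|mpc_all i k ki]; first exact: no_move_down mpc.
have [j mpc_ij] := mpc_all i (leq_ltn_trans (leq0n k) ki).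
exact: no_move_down mpc_ij ki.
Qed.
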